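(* Let $\mathcal{I}$ be a $\sigma$-ideal on $\mathbb{R}$ satisfying the standing assumptions, and let $L\subseteq\mathbb{R}$ be an $\mathcal{I}$-Luzin set. Then $L+\mathbb{Q}=\{l+q: l\in L, q\in\mathbb{Q}\}$ is a strong $\mathcal{I}$-Luzin set.
   Context: Standing assumptions on $\mathcal{I}$: $\mathcal{I}$ is a $\sigma$-ideal of subsets of $\mathbb{R}$ such that $\mathbb{R}\notin\mathcal{I}$; $x+I\in\mathcal{I}$ and $xI\in\mathcal{I}$ for all $x\in\mathbb{R}$, $I\in\mathcal{I}$; every member of $\mathcal{I}$ is contained in a Borel member of $\mathcal{I}$; and for all Borel $A,B\notin\mathcal{I}$ the set $A-B$ has nonempty interior. A set $L\subseteq\mathbb{R}$ is $\mathcal{I}$-Luzin if $|L|=\mathfrak{c}$ and $L\cap I$ is countable for every $I\in\mathcal{I}$; it is strong $\mathcal{I}$-Luzin if moreover $L\cap B$ is uncountable for every Borel set $B\notin\mathcal{I}$. *)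

From Stdlib Require Import Reals QArith Qreals.
Open Scope R_scope.

Definition set_R := R -> Prop.

Inductive borel : set_R -> Prop :=
| borel_open : forall U, open_set U -> borel U
| borel_compl : forall A, borel A -> borel (fun x => ~ A x)
| borel_cunion : forall F : nat -> set_R,
    (forall n, borel (F n)) -> borel (fun x => exists n, F n x).

Definition countable (A : set_R) : Prop :=
  exists f : R -> nat, forall x y, A x -> A y -> f x = f y -> x = y.

Definition card_continuum (A : set_R) : Prop :=
  exists f : {x : R | A x} -> R,
    (forall u v, f u = f v -> u = v) /\ (forall y, exists u, f u = y).

Definition sigma_ideal (I : set_R -> Prop) : Prop :=
  I (fun _ => False) /\
  (forall A B : set_R, I A -> (forall x, B x -> A x) -> I B) /\
  (forall F : nat -> set_R, (forall n, I (F n)) -> I (fun x => exists n, F n x)).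

Definition translate (x : R) (A : set_R) : set_R := fun y => exists a, A a /\ y = x + a.
Definition dilate (x : R) (A : set_R) : set_R := fun y => exists a, A a /\ y = x * a.
Definition minus_set (A B : set_R) : set_R := fun y => exists a b, A a /\ B b /\ y = a - b.

Definition nonempty_interior (A : set_R) : Prop :=
  exists (x : R) (d : posreal), forall y, Rabs (y - x) < d -> A y.

Definition standing_assumptions (I : set_R -> Prop) : Prop :=
  sigma_ideal I /\
  ~ I (fun _ => True) /\
  (forall x A, I A -> I (translate x A)) /\
  (forall x A, I A -> I (dilate x A)) /\
  (forall A, I A -> exists B, borel B /\ I B /\ (forall y, A y -> B y)) /\
  (forall A B, borel A -> borel B -> ~ I A -> ~ I B -> nonempty_interior (minus_set A B)).

Definition inter (A B : set_R) : set_R := fun x => A x /\ B x.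

Definition I_Luzin (I : set_R -> Prop) (L : set_R) : Prop :=
  card_continuum L /\ (forall J, I J -> countable (inter L J)).

Definition strong_I_Luzin (I : set_R -> Prop) (L : set_R) : Prop :=
  I_Luzin I L /\ (forall B, borel B -> ~ I B -> ~ countable (inter L B)).

Definition rationals : set_R := fun r => exists q : Q, r = Q2R q.

Definition plus_Q (L : set_R) : set_R :=
  fun y => exists l q, L l /\ rationals q /\ y = l + q.

From Stdlib Require Import Reals QArith Qreals Lra Lia.
From Stdlib Require Import Classical ClassicalEpsilon ProofIrrelevance.
From Stdlib Require Import FunctionalExtensionality PropExtensionality Cantor.
Open Scope R_scope.

(* Proof: L and L + Q have the same cardinality, and (L + Q) ∩ J is a countable union of
   translates of sets L ∩ (J - q), which are countable because I is translation invariant.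
   For a Borel set B outside I, the saturation B - Q is Borel and its complement lies in I:
   otherwise (R \ (B - Q)) - B would have nonempty interior and so contain a rational q,
   which is impossible.  Hence L ∩ (R \ (B - Q)) is countable, so L ∩ (B - Q) is uncountable,
   and L ∩ (B - Q) is covered by countably many translates of (L + Q) ∩ B. *)

Lemma countable_subset (A B : set_R) :
  countable A -> (forall x, B x -> A x) -> countable B.
Proof. intros [f Hf] H. exists f. intros x y Hx Hy. apply Hf; auto. Qed.

Lemma countable_shift (A : set_R) (c : R) :
  countable A -> countable (fun x => A (x + c)).
Proof.
  intros [f Hf]. exists (fun x => f (x + c)). intros x y Hx Hy E.
  assert (x + c = y + c) by (apply Hf; auto). lra.
Qed.

Lemma countable_bigcup (S : nat -> set_R) :
  (forall n, countable (S n)) -> countable (fun x => exists n, S n x).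
Proof.
  intros H.
  assert (X : forall n, {f : R -> nat | forall x y, S n x -> S n y -> f x = f y -> x = y}).
  { intro n. apply constructive_indefinite_description. apply H. }
  set (f := fun n => proj1_sig (X n)).
  set (N := fun x => epsilon (inhabits 0%nat) (fun n => S n x)).
  assert (HN : forall x, (exists n, S n x) -> S (N x) x).
  { intro x. apply (epsilon_spec (inhabits 0%nat) (fun n => S n x)). }
  exists (fun x => Cantor.to_nat (N x, f (N x) x)).
  intros x y Hx Hy E.
  apply (f_equal Cantor.of_nat) in E. rewrite !cancel_of_to in E.
  injection E as EN Ef.
  pose proof (HN x Hx) as Sx. pose proof (HN y Hy) as Sy.
  rewrite <- EN in Sy, Ef. exact (proj2_sig (X (N x)) x y Sx Sy Ef).
Qed.

Lemma countable_union (A B : set_R) :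
  countable A -> countable B -> countable (fun x => A x \/ B x).
Proof.
  intros cA cB.
  apply countable_subset
    with (fun x => exists n : nat, match n with O => A x | S _ => B x end).
  - apply countable_bigcup. intros [|n]; assumption.
  - intros x [Ax | Bx]; [exists 0%nat | exists 1%nat]; assumption.
Qed.

(* Nested trisection intervals [a_n, b_n], the (n+1)-st avoiding [u n]. *)
Fixpoint trisect (u : nat -> R) (n : nat) : R * R :=
  match n with
  | O => (0, 1)
  | S k => let (a, b) := trisect u k in
           let d := (b - a) / 3 in
           if Rle_dec (u k) (a + d) then (b - d, b) else (a, a + d)
  end.

Lemma trisect_step (u : nat -> R) (n : nat) :
  fst (trisect u n) < snd (trisect u n) ->
  fst (trisect u n) <= fst (trisect u (S n)) /\
  snd (trisect u (S n)) <= snd (trisect u n) /\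
  fst (trisect u (S n)) < snd (trisect u (S n)) /\
  (u n < fst (trisect u (S n)) \/ snd (trisect u (S n)) < u n).
Proof.
  simpl. destruct (trisect u n) as [a b]. simpl. intro H.
  destruct (Rle_dec (u n) (a + (b - a) / 3)); simpl; lra.
Qed.

Lemma trisect_lt (u : nat -> R) (n : nat) : fst (trisect u n) < snd (trisect u n).
Proof. induction n; [simpl; lra | apply trisect_step; auto]. Qed.

Lemma trisect_nested (u : nat -> R) (n m : nat) : (n <= m)%nat ->
  fst (trisect u n) <= fst (trisect u m) /\ snd (trisect u m) <= snd (trisect u n).
Proof.
  induction 1; [lra|].
  destruct (trisect_step u m (trisect_lt u m)) as [A [B _]]. lra.
Qed.

Lemma trisect_fst_le_snd (u : nat -> R) (n m : nat) :
  fst (trisect u n) <= snd (trisect u m).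
Proof.
  destruct (trisect_nested u n (max n m) ltac:(lia)).
  destruct (trisect_nested u m (max n m) ltac:(lia)).
  pose proof (trisect_lt u (max n m)). lra.
Qed.

Lemma no_injection_R_nat (w : R -> nat) : ~ (forall x y, w x = w y -> x = y).
Proof.
  intros Hw.
  set (u := fun n => epsilon (inhabits 0) (fun x => w x = n)).
  assert (Hu : forall x, u (w x) = x).
  { intro x. apply Hw. unfold u.
    apply (epsilon_spec (inhabits 0) (fun y => w y = w x)). exists x; auto. }
  set (E := fun y => exists n, y = fst (trisect u n)).
  destruct (completeness E) as [l [Hub Hlub]].
  { exists 1. intros y [n ->]. exact (trisect_fst_le_snd u n 0). }
  { exists 0, 0%nat. reflexivity. }
  assert (Hl : forall n, fst (trisect u n) <= l <= snd (trisect u n)).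
  { intro n. split.
    - apply Hub. exists n; auto.
    - apply Hlub. intros y [k ->]. apply trisect_fst_le_snd. }
  destruct (trisect_step u (w l) (trisect_lt u _)) as [_ [_ [_ Havoid]]].
  specialize (Hl (S (w l))). rewrite Hu in Havoid. lra.
Qed.

Lemma card_continuum_injection (A : set_R) : card_continuum A ->
  exists k : R -> R, (forall x y, k x = k y -> x = y) /\ (forall y, A (k y)).
Proof.
  intros [f [finj fsurj]].
  assert (X : forall y, {u | f u = y}).
  { intro y. apply constructive_indefinite_description; auto. }
  exists (fun y => proj1_sig (proj1_sig (X y))). split.
  - intros x y E. destruct (X x) as [[a pa] ea], (X y) as [[b pb] eb].
    simpl in E. subst b. rewrite <- ea, <- eb. f_equal. f_equal. apply proof_irrelevance.
  - intro y. destruct (X y) as [[a pa] ea]. exact pa.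
Qed.

Lemma not_countable_continuum (A : set_R) : card_continuum A -> ~ countable A.
Proof.
  intros cA [w Hw]. destruct (card_continuum_injection A cA) as [k [kinj kA]].
  apply (no_injection_R_nat (fun y => w (k y))). intros x y E. apply kinj, Hw; auto.
Qed.

(* Schröder–Bernstein against the inclusion X ⊆ R: [h] is moved one step along the chains
   that start outside X, and the identity is used elsewhere. *)
Lemma card_continuum_of_injection (X : set_R) (h : R -> R) :
  (forall x y, h x = h y -> x = y) -> (forall x, X (h x)) -> card_continuum X.
Proof.
  intros hinj hX.
  set (C := fun x => exists n z, ~ X z /\ x = Nat.iter n h z).
  set (F := fun x => if excluded_middle_informative (C x) then h x else x).
  assert (FX : forall x, X (F x)).
  { intro x. unfold F. destruct excluded_middle_informative as [c|c]; auto.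
    apply NNPP. intro nx. apply c. exists 0%nat, x. auto. }
  assert (Finj : forall x y, F x = F y -> x = y).
  { assert (K : forall x y, C x -> ~ C y -> h x <> y).
    { intros x y [n [z [nz ->]]] ny E. apply ny. exists (S n), z. split; auto. }
    intros x y. unfold F.
    destruct excluded_middle_informative as [cx|cx];
      destruct excluded_middle_informative as [cy|cy]; auto.
    - intro E. exfalso. exact (K x y cx cy E).
    - intro E. exfalso. exact (K y x cy cx (eq_sym E)). }
  assert (Fsurj : forall y, X y -> exists x, F x = y).
  { intros y Xy. destruct (classic (C y)) as [cy|cy].
    - destruct cy as [[|n] [z [nz ->]]]; [contradiction|].
      exists (Nat.iter n h z). unfold F. destruct excluded_middle_informative as [c|c].
      + reflexivity.
      + exfalso. apply c. exists n, z. auto.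
    - exists y. unfold F. destruct excluded_middle_informative; tauto. }
  set (F' := fun x => exist X (F x) (FX x)).
  assert (G : forall u : {x | X x}, {x | F' x = u}).
  { intros [y Xy]. apply constructive_indefinite_description.
    destruct (Fsurj y Xy) as [x <-]. exists x. unfold F'. f_equal. apply proof_irrelevance. }
  exists (fun u => proj1_sig (G u)). split.
  - intros u v E. destruct (G u) as [x ex], (G v) as [y ey]. simpl in E. subst. reflexivity.
  - intro y. exists (F' y). destruct (G (F' y)) as [x ex]. simpl.
    apply Finj. exact (f_equal (@proj1_sig _ _) ex).
Qed.

Lemma card_continuum_superset (A B : set_R) :
  card_continuum A -> (forall x, A x -> B x) -> card_continuum B.
Proof.
  intros cA AB. destruct (card_continuum_injection A cA) as [k [kinj kA]].
  apply (card_continuum_of_injection B k kinj). intro y. apply AB, kA.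
Qed.

Definition enumQ (n : nat) : Q :=
  let (p, b) := Cantor.of_nat n in
  let (a, c) := Cantor.of_nat p in
  Qmake (Z.of_nat a - Z.of_nat c) (Pos.of_nat b).

Lemma enumQ_surj (q : Q) : exists n, enumQ n = q.
Proof.
  destruct q as [z p].
  exists (Cantor.to_nat (Cantor.to_nat (Z.to_nat z, Z.to_nat (- z)), Pos.to_nat p)).
  unfold enumQ. rewrite !cancel_of_to, Pos2Nat.id. f_equal. lia.
Qed.

Lemma rationalsE (x : R) : rationals x <-> exists n, x = Q2R (enumQ n).
Proof.
  split.
  - intros [q ->]. destruct (enumQ_surj q) as [n <-]. exists n; reflexivity.
  - intros [n ->]. exists (enumQ n); reflexivity.
Qed.

Lemma rationals0 : rationals 0.
Proof. exists 0%Q. unfold Q2R; simpl; ring. Qed.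

Lemma rationalsN (x : R) : rationals x -> rationals (- x).
Proof. intros [q ->]. exists (- q)%Q. symmetry. apply Q2R_opp. Qed.

Lemma rationals_dense (x : R) (d : posreal) : exists q, rationals q /\ Rabs (q - x) < d.
Proof.
  destruct d as [d dpos]; simpl.
  destruct (archimed (/ d)) as [Hk _].
  set (k := up (/ d)) in *.
  assert (Hid : 0 < / d) by (apply Rinv_0_lt_compat; lra).
  assert (kpos : 0 < IZR k) by lra.
  destruct (archimed (x * IZR k)) as [Hm1 Hm2].
  set (m := up (x * IZR k)) in *.
  exists (IZR m / IZR k). split.
  - exists (Qmake m (Z.to_pos k)). unfold Q2R; simpl.
    rewrite Z2Pos.id by (apply lt_IZR; lra). reflexivity.
  - assert (E : IZR m / IZR k - x = (IZR m - x * IZR k) / IZR k) by (field; lra).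
    assert (dk : 1 / IZR k < d).
    { apply (Rmult_lt_reg_l (IZR k)); auto.
      replace (IZR k * (1 / IZR k)) with 1 by (field; lra).
      apply (Rmult_lt_reg_l (/ d)); auto.
      replace (/ d * (IZR k * d)) with (IZR k) by (field; lra). lra. }
    rewrite E, Rabs_right.
    + apply Rle_lt_trans with (1 / IZR k); auto.
      apply Rmult_le_compat_r; [apply Rlt_le, Rinv_0_lt_compat|]; lra.
    + apply Rle_ge, Rmult_le_pos; [lra | apply Rlt_le, Rinv_0_lt_compat; lra].
Qed.

Lemma countable_bigcup_rationals (S : R -> set_R) :
  (forall q, rationals q -> countable (S q)) ->
  countable (fun x => exists q, rationals q /\ S q x).
Proof.
  intros H.
  apply countable_subset with (fun x => exists n, S (Q2R (enumQ n)) x).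
  - apply countable_bigcup. intro n. apply H, rationalsE. exists n; reflexivity.
  - intros x [q [Hq Sx]]. apply rationalsE in Hq as [n ->]. exists n; exact Sx.
Qed.

Lemma borel_shift (A : set_R) (c : R) : borel A -> borel (fun x => A (x + c)).
Proof.
  intro HA. revert c. induction HA as [U HU | A _ IH | F _ IH]; intro c.
  - apply borel_open. intros x Hx. destruct (HU (x + c) Hx) as [d Hd].
    exists d. intros y Hy. apply Hd. unfold disc in *.
    replace (y + c - (x + c)) with (y - x) by ring. exact Hy.
  - exact (borel_compl _ (IH c)).
  - exact (borel_cunion (fun n x => F n (x + c)) (fun n => IH n c)).
Qed.

Definition saturation (B : set_R) : set_R := fun x => exists q, rationals q /\ B (x + q).

Lemma borel_saturation (B : set_R) : borel B -> borel (saturation B).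
Proof.
  intro HB.
  assert (E : saturation B = fun x => exists n, B (x + Q2R (enumQ n))).
  { apply functional_extensionality. intro x. apply propositional_extensionality.
    split.
    - intros [q [Hq Bq]]. apply rationalsE in Hq as [n ->]. exists n; exact Bq.
    - intros [n Bn]. exists (Q2R (enumQ n)). split; [apply rationalsE; exists n|]; auto. }
  rewrite E. apply borel_cunion. intro n. apply borel_shift, HB.
Qed.

Lemma saturation_compl_ideal (I : set_R -> Prop) (B : set_R) :
  (forall A B, borel A -> borel B -> ~ I A -> ~ I B -> nonempty_interior (minus_set A B)) ->
  borel B -> ~ I B -> I (fun x => ~ saturation B x).
Proof.
  intros Hint HB NB. apply NNPP. intro NE.
  destruct (Hint _ _ (borel_compl _ (borel_saturation B HB)) HB NE NB) as [x [d Hd]].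
  destruct (rationals_dense x d) as [q [Hq Hqx]].
  destruct (Hd q Hqx) as [e [b [He [Hb ->]]]].
  apply He. exists (- (e - b)). split; [apply rationalsN, Hq|].
  replace (e + - (e - b)) with b by ring. exact Hb.
Qed.

Lemma inter_saturation_countable (L B : set_R) :
  countable (inter (plus_Q L) B) -> countable (inter L (saturation B)).
Proof.
  intro cLB.
  apply countable_subset with (fun x => exists q, rationals q /\ inter (plus_Q L) B (x + q)).
  - apply countable_bigcup_rationals. intros q _. apply countable_shift, cLB.
  - intros x [Lx [q [Hq Bq]]]. exists q. repeat split; auto. exists x, q; auto.
Qed.

Lemma plus_Q_continuum (L : set_R) : card_continuum L -> card_continuum (plus_Q L).
Proof.
  intro cL. apply (card_continuum_superset L); auto.
  intros x Lx. exists x, 0. repeat split; auto using rationals0. ring.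
Qed.

Lemma inter_plus_Q_countable (I : set_R -> Prop) (L J : set_R) :
  (forall x A, I A -> I (translate x A)) ->
  (forall J, I J -> countable (inter L J)) ->
  I J -> countable (inter (plus_Q L) J).
Proof.
  intros Htr HL HJ.
  apply countable_subset
    with (fun y => exists q, rationals q /\ inter L (translate (- q) J) (y + - q)).
  - apply countable_bigcup_rationals. intros q _. apply countable_shift, HL, Htr, HJ.
  - intros y [[l [q [Ll [Hq ->]]]] Jy]. exists q. split; auto. split.
    + replace (l + q + - q) with l by ring. exact Ll.
    + exists (l + q). split; auto. ring.
Qed.

Theorem mainTheorem2 (I : set_R -> Prop) (L : set_R) :
  standing_assumptions I -> I_Luzin I L -> strong_I_Luzin I (plus_Q L).
Proof.
  intros [_ [_ [Htr [_ [_ Hint]]]]] [cL HL].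
  split; [split|].
  - apply plus_Q_continuum, cL.
  - intros J HJ. exact (inter_plus_Q_countable I L J Htr HL HJ).
  - intros B HB NB cLB.
    apply (not_countable_continuum L cL).
    apply countable_subset
      with (fun x => inter L (fun y => ~ saturation B y) x \/ inter L (saturation B) x).
    + apply countable_union.
      * apply HL, (saturation_compl_ideal I B Hint HB NB).
      * apply inter_saturation_countable, cLB.
    + intros x Lx. destruct (classic (saturation B x)); [right | left]; split; auto.
Qed.
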